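(* Let $U\subset\mathbb{R}^m$ be open and connected and let $\phi=(\phi^1,\dots,\phi^n):U\to\mathbb{R}^n$ be a smooth horizontally weakly conformal map. Let $\Phi:U\times\mathbb{R}^m\to\mathbb{R}^n$, $\Phi^k(x,y)=\sum_{i=1}^m\frac{\partial\phi^k}{\partial x_i}(x)\,y_i$, be its complete lift. Then $\Phi$ is horizontally weakly conformal if and only if, at every $x\in U$, for all $\alpha,\beta\in\{1,\dots,n\}$, $$(\operatorname{hess}\phi^\alpha)^2=(\operatorname{hess}\phi^\beta)^2,$$ and for all $\alpha\neq\beta$, $$(\operatorname{hess}\phi^\alpha)(\operatorname{hess}\phi^\beta)=-(\operatorname{hess}\phi^\beta)(\operatorname{hess}\phi^\alpha),$$ where $\operatorname{hess}\phi^\alpha$ denotes the $m\times m$ Hessian matrix $\big(\frac{\partial^2\phi^\alpha}{\partial x_i\partial x_j}\big)$.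
   Context: A smooth map $\psi=(\psi^1,\dots,\psi^n)$ from an open subset of $\mathbb{R}^N$ to $\mathbb{R}^n$ is horizontally weakly conformal if there is a function $\lambda$ with $\sum_{i=1}^N\frac{\partial\psi^k}{\partial x_i}\frac{\partial\psi^l}{\partial x_i}=\lambda^2\delta_{kl}$ for all $k,l=1,\dots,n$ at every point. For $\Phi$ the coordinates are $(x_1,\dots,x_m,y_1,\dots,y_m)$. *)

From HB Require Import structures.
From mathcomp Require Import all_boot all_order all_algebra.
From mathcomp Require Import all_classical all_reals all_analysis.
Set Implicit Arguments. Unset Strict Implicit. Unset Printing Implicit Defensive.
Import Order.TTheory GRing.Theory Num.Theory.
Import numFieldNormedType.Exports.
Local Open Scope classical_set_scope.
Local Open Scope ring_scope.

Definition ei {R : realType} {N : nat} (i : 'I_N) : 'rV[R]_N := delta_mx 0 i.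

Definition partial {R : realType} {N : nat} (i : 'I_N) (f : 'rV[R]_N -> R)
  : 'rV[R]_N -> R := fun x => 'D_(ei i) f x.

Definition iter_partial {R : realType} {N : nat} (s : seq 'I_N)
  (f : 'rV[R]_N -> R) : 'rV[R]_N -> R := foldr (@partial R N) f s.

Definition smooth_on {R : realType} {N : nat} (U : set 'rV[R]_N)
  (f : 'rV[R]_N -> R) : Prop :=
  forall (s : seq 'I_N) (x : 'rV[R]_N), U x -> differentiable (iter_partial s f) x.

Definition hwc {R : realType} {N n : nat} (D : set 'rV[R]_N)
  (psi : 'I_n -> 'rV[R]_N -> R) : Prop :=
  exists lambda : 'rV[R]_N -> R, forall z, D z ->
    forall k l : 'I_n,
      \sum_(i < N) partial i (psi k) z * partial i (psi l) z
      = lambda z ^+ 2 * (k == l)%:R.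

Definition hess {R : realType} {m : nat} (f : 'rV[R]_m -> R) (x : 'rV[R]_m)
  : 'M[R]_m := \matrix_(i, j) partial i (partial j f) x.

(* complete lift: Phi^k(x,y) = sum_i d phi^k/dx_i (x) y_i, with (x,y) in
   R^m x R^m = R^(m+m) encoded as row_mx x y *)
Definition complete_lift {R : realType} {m n : nat}
  (phi : 'I_n -> 'rV[R]_m -> R) : 'I_n -> 'rV[R]_(m + m) -> R :=
  fun k z => \sum_(i < m) partial i (phi k) (lsubmx z) * rsubmx z 0 i.

Definition lift_domain {R : realType} {m : nat} (U : set 'rV[R]_m)
  : set 'rV[R]_(m + m) := [set z | U (lsubmx z)].

From HB Require Import structures.
From mathcomp Require Import all_boot all_order all_algebra.
From mathcomp Require Import all_classical all_reals all_analysis.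
From mathcomp Require Import lra.
Import Order.TTheory GRing.Theory Num.Theory.
Import numFieldNormedType.Exports.
Local Open Scope classical_set_scope.
Local Open Scope ring_scope.

(* Differentiating the complete lift Phi(x, y) = sum_i d_i phi(x) y_i gives
   d Phi^k / d y_i = d_i phi^k (x) and d Phi^k / d x_i = (y H_k)_i, where H_k is
   the Hessian of phi^k at x, symmetric by Schwarz's theorem.  Hence the Gram
   matrix of the gradients of Phi at (x, y) is (y H_k H_l y^T)_kl plus the Gram
   matrix of phi at x, and the latter is scalar because phi is horizontally
   weakly conformal.  So Phi is horizontally weakly conformal iff for every y the
   matrix (y H_k H_l y^T)_kl is scalar.  By polarization, a quadratic form
   vanishes identically iff its matrix is antisymmetric, which turns this into
   H_a^2 = H_b^2 and H_a H_b = - H_b H_a for a <> b. *)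

Lemma MVT_is_derive {R : realType} {g dg : R -> R} {h : R} : 0 < h ->
  (forall t, 0 <= t <= h -> is_derive t 1 g (dg t)) ->
  exists2 d, 0 < d < h & g h - g 0 = dg d * h.
Proof.
move=> h0 gd.
have [|d|d] := @MVT R g dg 0 h h0.
- by move=> t; rewrite in_itv /= => /andP[t0 th]; apply: gd; rewrite !ltW.
- apply: derivable_within_continuous => t; rewrite in_itv /= => tI.
  by have [] := gd t tI.
by rewrite in_itv /= subr0 => dI E; exists d.
Qed.

Lemma ler_dist_half (R : numFieldType) (a b c e : R) :
  `|a - c| < e / 2 -> `|b - c| < e / 2 -> `|a - b| <= e.
Proof.
move=> ac bc; have -> : a - b = (a - c) - (b - c) by rewrite opprB addrA subrK.
by rewrite (le_trans (ler_normB _ _)) // [e]splitr lerD // ltW.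
Qed.

Section Schwarz.
Variables (R : realType) (V : normedModType R).
Implicit Types (f : V -> R) (u v c x : V).

Lemma is_derive_lineP f v c (s df : R) :
  is_derive s 1 (fun t => f (t *: v + c)) df <-> is_derive (s *: v + c) v f df.
Proof.
suff E : derivable (fun t : R => f (t *: v + c)) s 1 = derivable f (s *: v + c) v /\
         'D_1 (fun t : R => f (t *: v + c)) s = 'D_v f (s *: v + c).
  case: E => d e; split=> -[d' e']; split;
    [by rewrite -d | by rewrite -e | by rewrite d | by rewrite e].
rewrite /derivable /derive.
set g1 := fun h => h^-1 *: _; set g2 := fun h => h^-1 *: _.
suff -> : g1 = g2 by [].
by apply/funext => h; rewrite /g1 /g2 /= [h%:A]mulr1 scalerDl addrA.
Qed.

Lemma is_derive_line0P f v c (df : R) :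
  is_derive (0 : R) 1 (fun t => f (t *: v + c)) df <-> is_derive c v f df.
Proof. by have := is_derive_lineP f v c 0 df; rewrite scale0r add0r. Qed.

Definition second_difference f u v x (h : R) :=
  f (h *: u + h *: v + x) - f (h *: u + x) - f (h *: v + x) + f x.

Lemma second_differenceC f u v x h :
  second_difference f u v x h = second_difference f v u x h.
Proof. by rewrite /second_difference [h *: u + _]addrC; lra. Qed.

Lemma second_difference_MVT f u v x (h : R) : 0 < h ->
  (forall a b : R, 0 <= a <= h -> 0 <= b <= h ->
     derivable f (a *: u + b *: v + x) u /\
     derivable ('D_u f) (a *: u + b *: v + x) v) ->
  exists s t : R, [/\ 0 < s < h, 0 < t < h &
    second_difference f u v x h = 'D_v ('D_u f) (s *: u + t *: v + x) * (h * h)].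
Proof.
move=> h0 df.
have hI : 0 <= h <= h by rewrite lexx ltW.
have zI : 0 <= (0 : R) <= h by rewrite lexx ltW.
have ltW2 a : 0 < a < h -> 0 <= a <= h by case/andP=> *; rewrite !ltW.
pose psi t := f (t *: u + (h *: v + x)) - f (t *: u + x).
pose dpsi t := 'D_u f (t *: u + (h *: v + x)) - 'D_u f (t *: u + x).
have dpsi_psi t : 0 <= t <= h -> is_derive t 1 psi (dpsi t).
  move=> tI; apply: is_deriveB.
    by apply/is_derive_lineP/derivableP; rewrite addrA; exact: (df t h tI hI).1.
  apply/is_derive_lineP/derivableP.
  by have := (df t 0 tI zI).1; rewrite scale0r addr0.
have [s sI Es] := MVT_is_derive h0 dpsi_psi.
pose chi r := 'D_u f (r *: v + (s *: u + x)).
have dchi r : 0 <= r <= h ->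
    is_derive r 1 chi ('D_v ('D_u f) (r *: v + (s *: u + x))).
  move=> rI; apply/(is_derive_lineP ('D_u f) v (s *: u + x))/derivableP.
  by rewrite addrCA addrA; exact: (df s r (ltW2 s sI) rI).2.
have [t tI Et] := MVT_is_derive h0 dchi.
exists s, t; split => //.
have -> : second_difference f u v x h = psi h - psi 0.
  by rewrite /psi /second_difference scale0r !add0r addrA; lra.
rewrite Es.
have -> : dpsi s = chi h - chi 0 by rewrite /chi scale0r add0r addrCA.
by rewrite Et -mulrA addrCA addrA.
Qed.

Lemma schwarz f u v x :
  (\forall q \near x, [/\ derivable f q u, derivable f q v,
     derivable ('D_u f) q v & derivable ('D_v f) q u]) ->
  {for x, continuous ('D_v ('D_u f))} -> {for x, continuous ('D_u ('D_v f))} ->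
  'D_v ('D_u f) x = 'D_u ('D_v f) x.
Proof.
move=> dfx cuv cvu.
apply/eqP; rewrite -subr_eq0 -normr_le0; apply/ler_addgt0Pr => e e0; rewrite add0r.
have e2 : 0 < e / 2 by rewrite divr_gt0.
have [r /= r0 xr] := iffLR (nbhs_ballP _ _) (filterI dfx
  (filterI (@cvgr_dist_lt R R^o _ _ _ _ _ cuv _ e2)
           (@cvgr_dist_lt R R^o _ _ _ _ _ cvu _ e2))).
pose h := r / (`|u| + `|v| + 1).
have uv0 : 0 < `|u| + `|v| + 1 by rewrite ltr_wpDl ?addr_ge0.
have h0 : 0 < h by rewrite divr_gt0.
have hr : h * (`|u| + `|v| + 1) = r by rewrite /h divfK ?gt_eqF.
have inball (a b : R) : 0 <= a <= h -> 0 <= b <= h -> ball x r (a *: u + b *: v + x).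
  case/andP=> a0 ah /andP[b0 bh].
  rewrite -ball_normE /= [_ + x]addrC opprD addNKr normrN.
  rewrite (le_lt_trans (ler_normD _ _)) // !normrZ !ger0_norm //.
  have : a * `|u| <= h * `|u| by rewrite ler_wpM2r.
  have : b * `|v| <= h * `|v| by rewrite ler_wpM2r.
  nra.
have inball' (a b : R) : 0 <= a <= h -> 0 <= b <= h -> ball x r (a *: v + b *: u + x).
  by move=> aI bI; rewrite [a *: v + _]addrC; apply: inball.
have [s [t [sI tI E1]]] := second_difference_MVT f u v x h h0 (fun a b aI bI =>
  let: And4 d _ d' _ := (xr _ (inball a b aI bI)).1 in conj d d').
have [s' [t' [sI' tI' E2]]] := second_difference_MVT f v u x h h0 (fun a b aI bI =>
  let: And4 _ d _ d' := (xr _ (inball' a b aI bI)).1 in conj d d').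
have ltW2 (a : R) : 0 < a < h -> 0 <= a <= h by case/andP=> *; rewrite !ltW.
have [_ [xiA _]] := xr _ (inball _ _ (ltW2 _ sI) (ltW2 _ tI)).
have [_ [_ xiB]] := xr _ (inball' _ _ (ltW2 _ sI') (ltW2 _ tI')).
(* The two orders of applying the mean value theorem evaluate the same second
   difference. *)
have E : 'D_v ('D_u f) (s *: u + t *: v + x) = 'D_u ('D_v f) (s' *: v + t' *: u + x).
  have hh : h * h != 0 by rewrite mulf_neq0 // gt_eqF.
  by move: E2; rewrite -second_differenceC E1 => /(mulIf hh).
rewrite E in xiA.
exact: ler_dist_half xiA xiB.
Qed.
End Schwarz.

Section ScalarMatrix.
Variables (R : pzRingType) (n : nat).
Implicit Types (A : 'M[R]_n).

Lemma is_scalar_mx_entriesP A :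
  is_scalar_mx A <-> (forall k l, k != l -> A k l = 0) /\ (forall k l, A k k = A l l).
Proof.
split=> [/is_scalar_mxP[a ->] | [A0 Adiag]].
  by split=> k l; rewrite !mxE ?eqxx // => /negbTE ->.
apply/is_scalar_mxP; case: n A A0 Adiag => [|n'] A A0 Adiag.
  by exists 0; apply/matrixP => -[].
exists (A 0 0); apply/matrixP => k l; rewrite mxE.
case: (eqVneq k l) => [<-|kl]; first by rewrite mulr1n (Adiag k 0).
by rewrite mulr0n A0.
Qed.

Lemma is_scalar_mxD_scalar A c : is_scalar_mx (A + c%:M) = is_scalar_mx A.
Proof.
apply/is_scalar_mxP/is_scalar_mxP => -[a Ea].
  by exists (a - c); rewrite raddfB /= -Ea addrK.
by exists (a + c); rewrite Ea raddfD.
Qed.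
End ScalarMatrix.
Arguments is_scalar_mx_entriesP {R n A}.

Section QuadraticForm.
Variables (R : numDomainType) (m : nat).
Implicit Types (A B : 'M[R]_m) (y : 'rV[R]_m).

Definition qform A y : R := (y *m A *m y^T) 0 0.

Lemma qformD A B y : qform (A + B) y = qform A y + qform B y.
Proof. by rewrite /qform mulmxDr mulmxDl mxE. Qed.

Lemma qformN A y : qform (- A) y = - qform A y.
Proof. by rewrite /qform mulmxN mulNmx mxE. Qed.

Lemma qform_tr A y : qform A^T y = qform A y.
Proof.
by rewrite /qform -[in RHS](trmxK (y *m A *m y^T)) [in RHS]mxE !trmx_mul trmxK mulmxA.
Qed.

Lemma qform_mul_tr A B y :
  qform (A *m B^T) y = \sum_(i < m) (y *m A) 0 i * (y *m B) 0 i.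
Proof.
rewrite /qform mulmxA -mulmxA -trmx_mul mxE.
by apply: eq_bigr => i _; rewrite !mxE.
Qed.

Lemma qform_delta A i : qform A (delta_mx 0 i) = A i i.
Proof. by rewrite /qform trmx_delta -rowE -colE !mxE. Qed.

Lemma qform_delta2 A i j :
  qform A (delta_mx 0 i + delta_mx 0 j) = A i i + A i j + A j i + A j j.
Proof.
rewrite /qform linearD /= !trmx_delta !mulmxDl !mulmxDr -!rowE -!colE !mxE.
by rewrite !addrA.
Qed.

Let eq_oppr_eq0 (x : R) : x = - x -> x = 0.
Proof. by move/eqP; rewrite -addr_eq0 -mulr2n mulrn_eq0 => /eqP. Qed.

Lemma qform_eq0P A : (forall y, qform A y = 0) <-> A^T = - A.
Proof.
split=> [A0 | AN y]; last by apply: eq_oppr_eq0; rewrite -qformN -AN qform_tr.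
apply/matrixP => i j; rewrite !mxE; apply/eqP; rewrite -addr_eq0.
have := A0 (delta_mx 0 i + delta_mx 0 j).
by rewrite qform_delta2 -(qform_delta A i) -(qform_delta A j) !A0 addr0 add0r addrC => ->.
Qed.

Lemma sym_qform_eq0 A : A^T = A -> (forall y, qform A y = 0) -> A = 0.
Proof.
move=> AT /qform_eq0P; rewrite AT => AN.
by apply/matrixP => i j; rewrite mxE; apply: eq_oppr_eq0; rewrite {1}AN mxE.
Qed.

Lemma is_scalar_qform_productsP n (H : 'I_n -> 'M[R]_m) :
  (forall k, (H k)^T = H k) ->
  (forall y, is_scalar_mx (\matrix_(k, l) qform (H k *m H l) y)) <->
  (forall a b, H a *m H a = H b *m H b) /\
  (forall a b, a != b -> H a *m H b = - (H b *m H a)).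
Proof.
move=> Hsym; have trHH a b : (H a *m H b)^T = H b *m H a by rewrite trmx_mul !Hsym.
split=> [Hs | [Hsq Hanti] y]; last first.
  apply/is_scalar_mx_entriesP; split=> [k l kl | k l]; rewrite !mxE.
    by apply: (iffRL (qform_eq0P _)); rewrite trHH Hanti // eq_sym.
  by rewrite (Hsq k l).
have {}Hs y := iffLR is_scalar_mx_entriesP (Hs y).
split=> [a b | a b ab].
  apply/eqP; rewrite -subr_eq0; apply/eqP/sym_qform_eq0 => [|y].
    by rewrite linearB /= !trHH.
  by have [_ /(_ a b)] := Hs y; rewrite !mxE qformD qformN => ->; rewrite subrr.
have : (H a *m H b)^T = - (H a *m H b).
  by apply/qform_eq0P => y; have [/(_ a b ab)] := Hs y; rewrite mxE.
by rewrite trHH => ->; rewrite opprK.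
Qed.
End QuadraticForm.
Arguments qform {R m}.
Arguments is_scalar_qform_productsP {R m n H}.

Lemma trmx_hess (R : realType) m (U : set 'rV[R]_m) f x :
  open U -> smooth_on U f -> U x -> (hess f x)^T = hess f x.
Proof.
move=> oU sf Ux; apply/matrixP => i j; rewrite !mxE; apply: schwarz.
- have Ux' : nbhs x U by move: oU; rewrite openE => /(_ x Ux).
  apply: filterS Ux' => q Uq; split; apply: diff_derivable;
    [exact: sf [::] q Uq | exact: sf [::] q Uq |
     exact: sf [:: i] q Uq | exact: sf [:: j] q Uq].
- exact: differentiable_continuous (sf [:: j; i] x Ux).
- exact: differentiable_continuous (sf [:: i; j] x Ux).
Qed.

Definition gram {R : realType} {N n : nat} (psi : 'I_n -> 'rV[R]_N -> R)
  (z : 'rV[R]_N) : 'M[R]_n :=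
  \matrix_(k, l) \sum_(i < N) partial i (psi k) z * partial i (psi l) z.

Lemma hwc_gramP (R : realType) N n (D : set 'rV[R]_N) (psi : 'I_n -> 'rV[R]_N -> R) :
  hwc D psi <-> forall z, D z -> is_scalar_mx (gram psi z).
Proof.
split=> [[lam psi_lam] z Dz | psi_gram].
  apply/is_scalar_mxP; exists (lam z ^+ 2).
  by apply/matrixP => k l; rewrite !mxE psi_lam // mulr_natr.
case: n psi psi_gram => [|n] psi psi_gram; first by exists 0 => z _ [].
exists (fun z => Num.sqrt (gram psi z 0 0)) => z Dz k l.
have [off diag] := iffLR is_scalar_mx_entriesP (psi_gram z Dz).
rewrite sqr_sqrtr; last by rewrite mxE sumr_ge0 // => i _; rewrite -expr2 sqr_ge0.
case: (eqVneq k l) => [<-|kl]; first by rewrite mulr_natr mulr1n -(diag k 0) mxE.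
by move: (off k l kl); rewrite mxE mulr_natr mulr0n.
Qed.

Section CompleteLift.
Variables (R : realType) (m n : nat) (phi : 'I_n -> 'rV[R]_m -> R).

Lemma line_row_mx (a b : 'rV[R]_m) (t : R) (z : 'rV[R]_(m + m)) :
  t *: row_mx a b + z = row_mx (t *: a + lsubmx z) (t *: b + rsubmx z).
Proof. by rewrite -{1}[z]hsubmxK scale_row_mx add_row_mx. Qed.

Lemma partial_complete_lift_y k i z :
  partial (rshift m i) (complete_lift phi k) z = partial i (phi k) (lsubmx z).
Proof.
set x := lsubmx z; set y := rsubmx z; set a := partial i (phi k) x.
suff : is_derive z (ei (rshift m i)) (complete_lift phi k) a by case.
apply/is_derive_line0P.
have -> : (fun t => complete_lift phi k (t *: ei (rshift m i) + z)) =
          (fun t => complete_lift phi k z + t * a).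
  apply/funext => t; rewrite /ei delta_mx_rshift line_row_mx /complete_lift.
  rewrite row_mxKl row_mxKr scaler0 add0r -/x -/y.
  under eq_bigr do rewrite !mxE mulrDr mulrA mulr_natr.
  rewrite big_split /= addrC; congr (_ + _); first by apply: eq_bigr => j _; rewrite mxE.
  rewrite (bigD1 i) //= !eqxx mulr1n mulrC big1 ?addr0 // => j /negbTE ->.
  by rewrite mulr0n.
by apply: is_derive_eq; rewrite add0r mul1r scale0r add0r [a%:A]mulr1.
Qed.

Lemma partial_complete_lift_x k i z :
  (forall j, differentiable (partial j (phi k)) (lsubmx z)) ->
  partial (lshift m i) (complete_lift phi k) z
  = (rsubmx z *m (hess (phi k) (lsubmx z))^T) 0 i.
Proof.
move=> dphi; set x := lsubmx z; set y := rsubmx z.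
suff : is_derive z (ei (lshift m i)) (complete_lift phi k)
    (\sum_j y 0 j *: partial i (partial j (phi k)) x).
  case=> _; rewrite /partial => ->; rewrite !mxE.
  by apply: eq_bigr => j _; rewrite !mxE.
apply/is_derive_line0P.
have -> : (fun t => complete_lift phi k (t *: ei (lshift m i) + z)) =
          \sum_j (fun t => y 0 j *: partial j (phi k) (t *: ei i + x)).
  apply/funext => t; rewrite fct_sumE /ei delta_mx_lshift line_row_mx /complete_lift.
  rewrite row_mxKl row_mxKr scaler0 add0r -/x -/y.
  by apply: eq_bigr => j _; rewrite mulrC.
apply: is_derive_sum => j; apply: is_deriveZ; apply/is_derive_line0P.
by apply: derivableP; apply: diff_derivable.
Qed.

Lemma gram_complete_lift z :
  (forall k j, differentiable (partial j (phi k)) (lsubmx z)) ->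
  gram (complete_lift phi) z =
  \matrix_(k, l) qform ((hess (phi k) (lsubmx z))^T *m hess (phi l) (lsubmx z))
                       (rsubmx z)
  + gram phi (lsubmx z).
Proof.
move=> dphi; apply/matrixP => k l; rewrite !mxE big_split_ord /=; congr (_ + _).
  rewrite -[hess (phi l) _]trmxK qform_mul_tr; apply: eq_bigr => i _.
  by rewrite (partial_complete_lift_x _ _ _ (dphi k))
             (partial_complete_lift_x _ _ _ (dphi l)).
by apply: eq_bigr => i _; rewrite !partial_complete_lift_y.
Qed.
Lemma is_scalar_gram_complete_lift x y :
  (forall k j, differentiable (partial j (phi k)) x) ->
  (forall k, (hess (phi k) x)^T = hess (phi k) x) ->
  is_scalar_mx (gram phi x) ->
  is_scalar_mx (gram (complete_lift phi) (row_mx x y))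
  = is_scalar_mx (\matrix_(k, l) qform (hess (phi k) x *m hess (phi l) x) y).
Proof.
move=> dphi hessT /is_scalar_mxP[c gram_c].
rewrite gram_complete_lift row_mxKl ?row_mxKr ?gram_c ?is_scalar_mxD_scalar.
  by congr is_scalar_mx; apply/matrixP => k l; rewrite !mxE hessT.
by move=> k j; rewrite ?row_mxKl; apply: dphi.
Qed.
End CompleteLift.

Theorem theorem2p7 (R : realType) (m n : nat) (U : set 'rV[R]_m)
  (phi : 'I_n -> 'rV[R]_m -> R) :
  open U -> connected U ->
  (forall k, smooth_on U (phi k)) ->
  hwc U phi ->
  hwc (lift_domain U) (complete_lift phi) <->
  (forall x, U x ->
     (forall a b : 'I_n, hess (phi a) x *m hess (phi a) x
                         = hess (phi b) x *m hess (phi b) x) /\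
     (forall a b : 'I_n, a != b ->
        hess (phi a) x *m hess (phi b) x
        = - (hess (phi b) x *m hess (phi a) x))).
Proof.
move=> oU _ smooth /hwc_gramP gram_phi.
have hessT k x : U x -> (hess (phi k) x)^T = hess (phi k) x.
  exact: trmx_hess oU (smooth k).
have lift_scalar x y : U x ->
    is_scalar_mx (gram (complete_lift phi) (row_mx x y))
    = is_scalar_mx (\matrix_(k, l) qform (hess (phi k) x *m hess (phi l) x) y).
  move=> Ux; apply: is_scalar_gram_complete_lift (gram_phi x Ux) => [k j|k].
    exact: (smooth k [:: j]).
  exact: hessT.
rewrite hwc_gramP; split=> [lift x Ux | cond z].
  apply/(is_scalar_qform_productsP (fun k => hessT k x Ux)) => y.
  by rewrite -lift_scalar //; apply: lift; rewrite /lift_domain /= row_mxKl.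
rewrite /lift_domain /= => Uz; rewrite -[z]hsubmxK lift_scalar //.
by apply: (iffRL (is_scalar_qform_productsP (fun k => hessT k _ Uz))); apply: cond.
Qed.
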